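(* For every non-negative integer $d$, $$\sum_{a\in A_+(d)}\frac{\chi_t(a)}{a}=(-1)^d\frac{b_d(\chi_t)}{L_d}\quad\text{in } K[t].$$
   Context: $q$ is a power of a prime, $A=\mathbb{F}_q[\theta]$, $K=\mathbb{F}_q(\theta)$, $A_+(d)$ is the set of monic polynomials of degree $d$ in $A$. $t$ is an indeterminate and $\chi_t:A\to A[t]$ is the $\mathbb{F}_q$-algebra morphism with $\theta\mapsto t$. $D_d$ is the product of all monic polynomials of degree $d$ in $A$, $L_d$ is the least common multiple of all polynomials of degree $d$ in $A$, and $D_0=L_0=1$. For $f:A\to A[t]$, $M_d(f)(z):=\sum_{b\in A_+(d)} f(b)\prod_{a\in A_+(d)\setminus\{b\}}(z-a)\in A[t][z]$. The Wagner coefficients are $b_d(\chi_t):=(-1)^d\frac{L_d}{D_d}M_d(\chi_t)(0)\in K[t]$. *)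

From HB Require Import structures.
From mathcomp Require Import all_boot all_order all_algebra all_field.
Set Implicit Arguments. Unset Strict Implicit. Unset Printing Implicit Defensive.
Import GRing.Theory.
Local Open Scope ring_scope.

(* F plays the role of F_q (any finite field; its order q is a prime power).
   A = {poly F} (variable theta), K = {fraction {poly F}},
   A[t] = {poly {poly F}}, K[t] = {poly {fraction {poly F}}},
   A[t][z] = {poly {poly {poly F}}}. *)

Section Defs.
Variable F : finFieldType.

Definition monic_of (d : nat) (c : {ffun 'I_d -> F}) : {poly F} :=
  'X^d + \sum_(i < d) c i *: 'X^i.

Definition Aplus (d : nat) : seq {poly F} :=
  [seq monic_of c | c <- enum {ffun 'I_d -> F}].

Definition Dd (d : nat) : {poly F} := \prod_(a <- Aplus d) a.

Definition lcmp (p q : {poly F}) : {poly F} := (p * q) %/ gcdp p q.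

(* L_d : the monic lcm of all polynomials of degree d, i.e. of all monic
   polynomials of degree d (every degree-d polynomial is associate to one). *)
Definition Ld (d : nat) : {poly F} :=
  let l := \big[lcmp/1]_(a <- Aplus d) a in (lead_coef l)^-1 *: l.

Definition toK (a : {poly F}) : {fraction {poly F}} := @FracField.tofrac _ a.

(* chi_t : A -> A[t], theta |-> t *)
Definition chi_t (a : {poly F}) : {poly {poly F}} := map_poly polyC a.

Definition AtoK (x : {poly {poly F}}) : {poly {fraction {poly F}}} :=
  map_poly toK x.

Definition Md (d : nat) (f : {poly F} -> {poly {poly F}})
  : {poly {poly {poly F}}} :=
  \sum_(b <- Aplus d)
     (f b)%:P * \prod_(a <- Aplus d | a != b) ('X - (a%:P)%:P).

Definition bd (d : nat) : {poly {fraction {poly F}}} :=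
  (-1) ^+ d * (toK (Ld d) / toK (Dd d))%:P * AtoK (Md d chi_t).[0].

End Defs.

From HB Require Import structures.
From mathcomp Require Import all_boot all_order all_algebra all_field.
From mathcomp Require Import ring.
Import GRing.Theory.
Local Open Scope ring_scope.

(* Evaluating M_d(chi_t) at z = 0 turns each product over a != b into
   prod_(a != b) (-a) = (-1)^(q^d - 1) D_d / b = D_d / b, because
   (-1)^(q^d - 1) = 1 in F_q.  Hence
   b_d(chi_t) = (-1)^d L_d sum_b chi_t(b) / b. *)

Lemma prodrN_seq (R : comPzRingType) (I : Type) (s : seq I) (P : pred I)
    (f : I -> R) :
  \prod_(i <- s | P i) - f i = (-1) ^+ count P s * \prod_(i <- s | P i) f i.
Proof.
elim: s => [|x s IHs]; first by rewrite !big_nil mulr1.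
rewrite !big_cons /=; case: (P x) => /=; last by rewrite add0n IHs.
by rewrite IHs exprS; ring.
Qed.

Lemma count_predC1_uniq (T : eqType) (s : seq T) (x : T) :
  uniq s -> x \in s -> count (predC1 x) s = (size s).-1.
Proof.
move=> s_uniq sx; have := count_predC (pred1 x) s.
by rewrite count_uniq_mem // sx add1n => <-.
Qed.

Lemma expN1_pred_cardXn (F : finFieldType) (n : nat) :
  (-1 : F) ^+ (#|F| ^ n).-1 = 1.
Proof.
have expN1_cardXn m : (-1 : F) ^+ (#|F| ^ m) = -1.
  by elim: m => [|m IHm]; rewrite ?expr1 // expnSr exprM IHm expf_card.
have cardXn_gt0 : (0 < #|F| ^ n)%N.
  by rewrite expn_gt0; apply/orP; left; apply/card_gt0P; exists 0.
move: (expN1_cardXn n); rewrite -{1}(prednK cardXn_gt0) exprSr mulrN1.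
exact: oppr_inj.
Qed.

Lemma mul_polyC_divK (K : fieldType) (c : {poly K}) (x y : K) (p : {poly K}) :
  y != 0 -> c * (x / y)%:P * (y%:P * p) = c * x%:P * p.
Proof.
by move=> y_neq0; rewrite -!mulrA [(x / y)%:P * _]mulrA -polyCM divfK.
Qed.

Lemma signr_mul_polyCK (K : fieldType) (n : nat) (x : K) (p : {poly K}) :
  x != 0 -> (-1) ^+ n * ((-1) ^+ n * x%:P * p) / x%:P = p.
Proof.
by move=> x_neq0; rewrite mulrA signrMK mulrAC polyCV -polyCM divff // mul1r.
Qed.

Section MonicPolynomials.
Variables (F : finFieldType) (d : nat).

Lemma coef_monic_of (c : {ffun 'I_d -> F}) (i : 'I_d) : (monic_of c)`_i = c i.
Proof.
rewrite coefD coefXn ltn_eqF // add0r coef_sum (bigD1 i) //= coefZ coefXn eqxx.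
rewrite mulr1 big1 ?addr0 // => j neq_ji.
by rewrite coefZ coefXn eq_sym (inj_eq val_inj) (negbTE neq_ji) mulr0.
Qed.

Lemma coef_monic_of_deg (c : {ffun 'I_d -> F}) : (monic_of c)`_d = 1.
Proof.
rewrite coefD coefXn eqxx coef_sum big1 ?addr0 // => j _.
by rewrite coefZ coefXn gtn_eqF // mulr0.
Qed.

Lemma monic_of_inj : injective (@monic_of F d).
Proof.
by move=> c1 c2 eq_c; apply/ffunP => i; rewrite -!coef_monic_of eq_c.
Qed.

Lemma Aplus_uniq : uniq (Aplus F d).
Proof. by rewrite map_inj_uniq ?enum_uniq //; apply: monic_of_inj. Qed.

Lemma size_Aplus : size (Aplus F d) = (#|F| ^ d)%N.
Proof. by rewrite size_map -cardE card_ffun card_ord. Qed.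

Lemma Aplus_neq0 (a : {poly F}) : a \in Aplus F d -> a != 0.
Proof.
case/mapP => c _ ->; apply: contra_neq (@oner_neq0 F) => c0.
by rewrite -(coef_monic_of_deg c) c0 coef0.
Qed.

Lemma lcmp_neq0 (p q : {poly F}) : p != 0 -> q != 0 -> lcmp p q != 0.
Proof.
move=> p_neq0 q_neq0; apply: contraTneq (mulf_neq0 p_neq0 q_neq0) => lcm0.
rewrite -(divpK (dvdp_mulr q (dvdp_gcdl p q))).
by rewrite /lcmp in lcm0; rewrite lcm0 mul0r eqxx.
Qed.

Lemma Ld_neq0 : Ld F d != 0.
Proof.
have lcm_neq0 : \big[@lcmp F/1]_(a <- Aplus F d) a != 0.
  rewrite big_seq; apply: (big_ind (fun p => p != 0)).
  - exact: oner_neq0.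
  - exact: lcmp_neq0.
  - exact: Aplus_neq0.
by rewrite scale_poly_eq0 negb_or invr_eq0 lead_coef_eq0 lcm_neq0.
Qed.

Lemma Dd_neq0 : Dd F d != 0.
Proof.
rewrite /Dd prodf_seq_neq0; apply/allP => a Aa; apply/implyP => _.
exact: Aplus_neq0.
Qed.

Lemma prod_Aplus_neq_opp (b : {poly F}) : b \in Aplus F d ->
  \prod_(a <- Aplus F d | a != b) - toK a = toK (Dd F d) / toK b.
Proof.
move=> Ab; have b_neq0 : toK b != 0 by rewrite tofrac_eq0 Aplus_neq0.
rewrite prodrN_seq count_predC1_uniq ?Aplus_uniq // size_Aplus.
have -> : (-1 : {fraction {poly F}}) ^+ (#|F| ^ d).-1 = 1.
  have := congr1 (fun x : F => toK x%:P) (expN1_pred_cardXn F d).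
  by rewrite /toK !rmorphXn !rmorphN1 !rmorph1.
rewrite mul1r /Dd /toK rmorph_prod (bigD1_seq b Ab Aplus_uniq) /=.
by rewrite mulrC mulKf.
Qed.

Lemma AtoK_Md_chi_t_horner0 :
  AtoK (Md d (@chi_t F)).[0]
  = (toK (Dd F d))%:P * \sum_(b <- Aplus F d) AtoK (chi_t b) / (toK b)%:P.
Proof.
rewrite /Md horner_sum /AtoK !rmorph_sum mulr_sumr; apply: eq_big_seq => b Ab.
rewrite hornerM hornerC horner_prod rmorphM rmorph_prod /=.
under eq_bigr do rewrite hornerXsubC sub0r rmorphN /= map_polyC -polyCN.
rewrite -(rmorph_prod (@polyC _)) prod_Aplus_neq_opp //.
by rewrite rmorphM /= polyCV mulrCA.
Qed.

Lemma bd_chi_t : bd F d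
  = (-1) ^+ d * (toK (Ld F d))%:P
    * \sum_(b <- Aplus F d) AtoK (chi_t b) / (toK b)%:P.
Proof.
have D_neq0 : toK (Dd F d) != 0 by rewrite tofrac_eq0 Dd_neq0.
rewrite /bd AtoK_Md_chi_t_horner0; exact: mul_polyC_divK.
Qed.

End MonicPolynomials.

Theorem theorem4p2p2 (F : finFieldType) (d : nat) :
  \sum_(a <- Aplus F d) AtoK (chi_t a) / (toK a)%:P
  = (-1) ^+ d * bd F d / (toK (Ld F d))%:P.
Proof.
have L_neq0 : toK (Ld F d) != 0 by rewrite tofrac_eq0 Ld_neq0.
by rewrite bd_chi_t; apply/esym/signr_mul_polyCK.
Qed.
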